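(* Let $\Omega\subset\mathbb R^2$ be a bounded open set and $A$ a bounded measurable symmetric $2\times2$ matrix-valued function on $\Omega$ with $\det A$ bounded below by a positive constant, and let $\widehat A=A/\det A$. Then $\gamma(A)=\gamma(\widehat A)$, where for such a matrix function $A$, $$\gamma(A)=\left(\sup_{S_\rho(x)\subset\Omega}\ \inf_{\varphi,\psi\in\mathcal B_{x,\rho}}\sqrt{\frac{\sup\varphi}{\inf\psi}}\;\frac{\frac{1}{|S_\rho(x)|}\int_{S_\rho(x)}\sqrt{\frac{\psi}{\varphi}}\,\frac{\langle n,An\rangle}{\sqrt{\det A}}\,d\sigma}{\frac{4}{\pi}\arctan\left(\frac{\inf_{S_\rho(x)}\det A/(\varphi\psi)}{\sup_{S_\rho(x)}\det A/(\varphi\psi)}\right)^{1/4}}\right)^{-1}.$$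
   Context: $S_\rho(x)$ is the circle of radius $\rho$ centered at $x$ (sup over circles contained in $\Omega$), $|S_\rho(x)|=2\pi\rho$, $d\sigma$ arc-length, $n$ the outer unit normal to $S_\rho(x)$, $\mathcal B_{x,\rho}$ the set of positive functions in $L^\infty(S_\rho(x))$ bounded below away from zero, and sup/inf over the circle are essential. *)

From HB Require Import structures.
From mathcomp Require Import all_boot all_order all_algebra.
From mathcomp Require Import all_classical all_reals all_analysis ess_sup_inf.
Set Implicit Arguments. Unset Strict Implicit. Unset Printing Implicit Defensive.
Import Order.TTheory GRing.Theory Num.Theory.
Import numFieldNormedType.Exports.
Local Open Scope classical_set_scope.
Local Open Scope ring_scope.

Section Gamma.
Variable R : realType.

Definition circ (x : R * R) (rho t : R) : R * R :=
  (x.1 + rho * cos t, x.2 + rho * sin t).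

(* Normalised arc-length on a circle corresponds to (1/2pi) dt on [0,2pi];
   null sets for arc length = Lebesgue-null sets of angles. *)
Definition angles : set R := `[0%R, (2 * pi)%R]%classic.

Definition mu_c := mrestr (@lebesgue_measure R) (measurable_itv `[0%R, (2 * pi)%R]).

Definition Bclass (phi : R -> R) : Prop :=
  measurable_fun angles phi /\
  exists c C : R, 0 < c /\ {ae mu_c, forall t, c <= phi t <= C}.

(* <n, A n> / sqrt(det A) at the point of angle t, n = (cos t, sin t). *)
Definition nAn (A : R * R -> 'M[R]_2) (x : R * R) (rho t : R) : R :=
  let M := A (circ x rho t) in
  (cos t ^+ 2 * M 0 0 + cos t * sin t * (M 0 1 + M 1 0) + sin t ^+ 2 * M 1 1)
  / Num.sqrt (\det M).

Definition detA_on (A : R * R -> 'M[R]_2) (x : R * R) (rho t : R) : R :=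
  \det (A (circ x rho t)).

Definition esup (f : R -> R) : R := fine (ess_sup mu_c (EFin \o f)).
Definition einf (f : R -> R) : R := fine (ess_inf mu_c (EFin \o f)).

Definition Qcirc (A : R * R -> 'M[R]_2) (x : R * R) (rho : R)
    (phi psi : R -> R) : \bar R :=
  let g := fun t => detA_on A x rho t / (phi t * psi t) in
  ((Num.sqrt (esup phi / einf psi) * (2 * pi)^-1
     / (4 / pi * atan ((einf g / esup g) `^ (4^-1)))) %:E
   * (\int[@lebesgue_measure R]_(t in angles)
        (Num.sqrt (psi t / phi t) * nAn A x rho t)%:E))%E.

Definition inner_inf (A : R * R -> 'M[R]_2) (x : R * R) (rho : R) : \bar R :=
  ereal_inf [set Qcirc A x rho phi psi | phi in Bclass & psi in Bclass].

Definition sup_circ (Omega : set (R * R)) (A : R * R -> 'M[R]_2) : \bar R :=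
  ereal_sup [set inner_inf A p.1 p.2 | p in
     [set p : (R * R) * R | 0 < p.2 /\ forall t, Omega (circ p.1 p.2 t)]].

(* gamma(A) = (sup ...)^{-1}, with 1/0 = +oo and 1/(+oo) = 0. *)
Definition gamma (Omega : set (R * R)) (A : R * R -> 'M[R]_2) : \bar R :=
  match sup_circ Omega A with
  | EFin r => if r == 0 then +oo%E else (r^-1)%:E
  | _ => 0%E
  end.

Definition Ahat (A : R * R -> 'M[R]_2) : R * R -> 'M[R]_2 :=
  fun p => (\det (A p))^-1 *: A p.

End Gamma.

From HB Require Import structures.
From mathcomp Require Import all_boot all_order all_algebra.
From mathcomp Require Import all_classical all_reals all_analysis ess_sup_inf.
From mathcomp Require Import measurable_realfun.
From mathcomp Require Import ring.
Set Implicit Arguments. Unset Strict Implicit. Unset Printing Implicit Defensive.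
Import Order.TTheory GRing.Theory Num.Theory.
Import numFieldNormedType.Exports.
Local Open Scope classical_set_scope.
Local Open Scope ring_scope.

(* The substitution (phi, psi) |-> (1/psi, 1/phi) is an involution of
   B_{x,rho} x B_{x,rho}.  Since det Ahat = 1/det A and the normalised
   quadratic form <n, A n>/sqrt(det A) is invariant under A |-> A/det A, and
   since ess sup (1/f) = 1/(ess inf f) for f bounded away from 0 and from
   infinity, this substitution carries the quantity minimised for Ahat onto
   the one minimised for A.  Hence the infima agree on every circle, and so
   do the suprema over circles and gamma. *)

Section ess_sup_inf_inv.
Context d (T : measurableType d) (R : realType).
Variable mu : {measure set T -> \bar R}.
Hypothesis mu_gt0 : (0 < mu [set: T])%E.

Definition ae_bounded_away (f : T -> R) :=
  exists c C : R, 0 < c /\ \forall x \ae mu, c <= f x <= C.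

Lemma ae_bounded_awayV f :
  ae_bounded_away f -> ae_bounded_away (fun x => (f x)^-1).
Proof.
move=> [c [C [c_gt0 cfC]]]; exists C^-1, c^-1; split.
  have PF := ae_properfilter_algebraOfSetsType mu_gt0.
  rewrite invr_gt0; apply: (@filter_const _ _ PF); apply: filterS cfC.
  by move=> x /andP[cf fC]; apply: lt_le_trans fC; apply: lt_le_trans cf.
apply: filterS cfC => x /andP[cf fC].
have fx_gt0 : 0 < f x by apply: lt_le_trans cf.
by rewrite !lef_pV2 ?posrE ?cf ?fC //; apply: lt_le_trans fC.
Qed.

Lemma ae_bounded_awayM f g :
  ae_bounded_away f -> ae_bounded_away g -> ae_bounded_away (f \* g).
Proof.
move=> [c [C [c_gt0 cfC]]] [c' [C' [c'_gt0 cgC]]].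
exists (c * c'), (C * C'); split; first exact: mulr_gt0.
apply: filterS2 cfC cgC => x /andP[cf fC] /andP[cg gC] /=.
have [c0 c'0] := (ltW c_gt0, ltW c'_gt0).
rewrite !ler_pM //; [exact: le_trans cf | exact: le_trans cg].
Qed.

Lemma ess_inf_ae_bounded f c C : (\forall x \ae mu, c <= f x <= C) ->
  exists2 r : R, ess_inf mu (EFin \o f) = r%:E & c <= r <= C.
Proof.
move=> cfC; have PF := ae_properfilter_algebraOfSetsType mu_gt0.
have cI : (c%:E <= ess_inf mu (EFin \o f))%E.
  by apply/ess_infP; apply: filterS cfC => x /andP[+ _]; rewrite /= lee_fin.
have IC : (ess_inf mu (EFin \o f) <= C%:E)%E.
  apply: (@filter_const _ _ PF).
  apply: filterS2 cfC (ess_inf_le mu (EFin \o f)).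
  by move=> x /andP[_ fC] /= If; apply: le_trans If _; rewrite lee_fin.
move: cI IC; case: (ess_inf _ _) => [r | | ] //=; rewrite !lee_fin => cr rC.
by exists r => //; rewrite cr rC.
Qed.

Lemma ess_sup_ae_bounded f c C : (\forall x \ae mu, c <= f x <= C) ->
  exists2 r : R, ess_sup mu (EFin \o f) = r%:E & c <= r <= C.
Proof.
move=> cfC; have PF := ae_properfilter_algebraOfSetsType mu_gt0.
have SC : (ess_sup mu (EFin \o f) <= C%:E)%E.
  by apply/ess_supP; apply: filterS cfC => x /andP[_ +]; rewrite /= lee_fin.
have cS : (c%:E <= ess_sup mu (EFin \o f))%E.
  apply: (@filter_const _ _ PF).
  apply: filterS2 cfC (ess_sup_ge mu (EFin \o f)).
  by move=> x /andP[cf _] /= fS; apply: le_trans fS; rewrite lee_fin.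
move: cS SC; case: (ess_sup _ _) => [r | | ] //=; rewrite !lee_fin => cr rC.
by exists r => //; rewrite cr rC.
Qed.

Lemma ess_sup_inv f : ae_bounded_away f ->
  fine (ess_sup mu (EFin \o (fun x => (f x)^-1))) =
  (fine (ess_inf mu (EFin \o f)))^-1.
Proof.
move=> fb; have [c [? [c_gt0 cfC]]] := fb.
have [c' [? [c'_gt0 cgC]]] := ae_bounded_awayV fb.
have [r Ir /andP[cr _]] := ess_inf_ae_bounded cfC.
have [s Ss /andP[cs _]] := ess_sup_ae_bounded cgC.
have r_gt0 : 0 < r by apply: lt_le_trans cr.
have s_gt0 : 0 < s by apply: lt_le_trans cs.
rewrite Ir Ss /=; apply/eqP; rewrite eq_le; apply/andP; split.
- rewrite -lee_fin -Ss; apply/ess_supP.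
  apply: filterS2 cfC (ess_inf_le mu (EFin \o f)); rewrite Ir.
  move=> x /andP[cf _] /=; rewrite !lee_fin => rf.
  by rewrite lef_pV2 ?posrE //; apply: lt_le_trans rf.
- rewrite -[s]invrK lef_pV2 ?posrE ?invr_gt0 // -lee_fin -Ir; apply/ess_infP.
  apply: filterS2 cfC (ess_sup_ge mu (EFin \o (fun x => (f x)^-1))); rewrite Ss.
  move=> x /andP[cf _] /=; rewrite !lee_fin => fs.
  have fx_gt0 : 0 < f x by apply: lt_le_trans cf.
  by rewrite -[f x]invrK lef_pV2 ?posrE ?invr_gt0.
Qed.

Lemma ess_inf_inv f : ae_bounded_away f ->
  fine (ess_inf mu (EFin \o (fun x => (f x)^-1))) =
  (fine (ess_sup mu (EFin \o f)))^-1.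
Proof.
move=> /ae_bounded_awayV /ess_sup_inv.
have -> : (fun x => (f x)^-1^-1) = f by apply/funext => x; rewrite invrK.
by move=> ->; rewrite invrK.
Qed.

End ess_sup_inf_inv.

Lemma det_mx2 (F : comRingType) (M : 'M[F]_2) :
  \det M = M 0 0 * M 1 1 - M 0 1 * M 1 0.
Proof.
rewrite (expand_det_row _ 0) !big_ord_recl big_ord0 /cofactor !det_mx11 /= !mxE.
have liftE (i : 'I_2) (j : 'I_1) : lift i j = (if i == 0 then 1 else 0).
  by apply/val_inj; case: i => [[|[|]]] //= _; case: j => [[|]].
rewrite !liftE /= !expr0 !mul1r expr1.
have -> : (ord0 : 'I_2) = 0 by apply/val_inj.
ring.
Qed.

Lemma det_invdetZ (F : fieldType) (M : 'M[F]_2) :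
  \det ((\det M)^-1 *: M) = (\det M)^-1.
Proof.
rewrite detZ; have [->|d_neq0] := eqVneq (\det M) 0.
  by rewrite invr0 mulr0.
by rewrite expr2 -mulrA mulVf ?mulr1.
Qed.

Lemma det_mx2_le (R : realDomainType) (M : 'M[R]_2) (B : R) :
  (forall i j, `|M i j| <= B) -> \det M <= B * B + B * B.
Proof.
move=> MB; rewrite det_mx2.
apply: le_trans (ler_norm _) _; apply: le_trans (ler_normB _ _) _.
by rewrite !normrM; apply: lerD; apply: ler_pM.
Qed.

Section circle.
Variable R : realType.
Implicit Types (A : R * R -> 'M[R]_2) (phi psi : R -> R).

Lemma mu_c_gt0 : (0 < (@mu_c R) [set: R])%E.
Proof.
rewrite /mu_c /mrestr setTI lebesgue_measure_itv /= lte_fin mulr_gt0 ?pi_gt0 //.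
by rewrite oppr0 addr0 lte_fin mulr_gt0 ?pi_gt0.
Qed.

Lemma Bclass_bounded_away phi : Bclass phi -> ae_bounded_away (@mu_c R) phi.
Proof. by case. Qed.

Lemma measurable_inv : measurable_fun [set: R] (@GRing.inv R).
Proof.
have -> : [set: R] = [set x | x != 0] `|` [set 0].
  by apply/seteqP; split => x //= _; case: (eqVneq x 0); [right | left].
apply/(measurable_funU _ (open_measurable (@open_neq _ 0)) (measurable_set1 0)).
split; last exact: measurable_fun_set1.
apply: open_continuous_measurable_fun; first exact: open_neq.
by move=> x; rewrite inE => x_neq0; apply: inv_continuous.
Qed.

Lemma Bclass_inv phi : Bclass phi -> Bclass (fun t => (phi t)^-1).
Proof.
move=> Bphi; split; first exact: measurableT_comp measurable_inv Bphi.1.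
exact: (ae_bounded_awayV mu_c_gt0 (Bclass_bounded_away Bphi)).
Qed.

Lemma detA_on_Ahat A x rho t :
  detA_on (Ahat A) x rho t = (detA_on A x rho t)^-1.
Proof. exact: det_invdetZ. Qed.

Lemma nAn_Ahat A x rho t : nAn (Ahat A) x rho t = nAn A x rho t.
Proof.
rewrite /nAn -/(detA_on _ x rho t) detA_on_Ahat /Ahat !mxE.
rewrite /detA_on; set M := A _; set d := \det M.
(* Num.sqrt vanishes on nonpositive numbers, so both sides are 0 if d <= 0. *)
have [d_gt0 | d_le0] := ltrP 0 d; last first.
  have /eqP -> : Num.sqrt d == 0 by rewrite sqrtr_eq0.
  have /eqP -> : Num.sqrt d^-1 == 0 by rewrite sqrtr_eq0 invr_le0.
  by rewrite !invr0 !mulr0.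
have sd_neq0 : Num.sqrt d != 0 by rewrite sqrtr_eq0 -ltNge.
rewrite sqrtrV ?ltW // invrK -[in d^-1](sqr_sqrtr (ltW d_gt0)).
by field.
Qed.

End circle.

Section Qcirc_Ahat.
Variables (R : realType) (A : R * R -> 'M[R]_2) (x : R * R) (rho c C : R).
Hypotheses (c_gt0 : 0 < c)
  (detA_bounded : forall t, c <= detA_on A x rho t <= C).

Lemma Qcirc_Ahat phi psi : Bclass phi -> Bclass psi ->
  Qcirc (Ahat A) x rho phi psi =
  Qcirc A x rho (fun t => (psi t)^-1) (fun t => (phi t)^-1).
Proof.
move=> /Bclass_bounded_away phi_bd /Bclass_bounded_away psi_bd.
set g := fun t => detA_on A x rho t / ((psi t)^-1 * (phi t)^-1).
have g_bd : ae_bounded_away (@mu_c R) g.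
  have -> : g = detA_on A x rho \* psi \* phi.
    by apply/funext => t; rewrite /g invfM !invrK mulrA.
  apply: ae_bounded_awayM phi_bd; apply: ae_bounded_awayM psi_bd.
  by exists c, C; split => //; apply: nearW.
rewrite /Qcirc.
have -> : (fun t => detA_on (Ahat A) x rho t / (phi t * psi t)) =
          (fun t => (g t)^-1).
  apply/funext => t.
  by rewrite detA_on_Ahat /g !invfM !invrK [_ / psi t]mulrC.
rewrite /esup /einf.
rewrite (ess_sup_inv (mu_c_gt0 R) g_bd) (ess_inf_inv (mu_c_gt0 R) g_bd).
rewrite (ess_sup_inv (mu_c_gt0 R) psi_bd) (ess_inf_inv (mu_c_gt0 R) phi_bd).
rewrite -/g !invrK; congr (_ * _)%E.
  by rewrite [_^-1 * fine _]mulrC [_^-1 * fine _]mulrC.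
by apply: eq_integral => t _; rewrite nAn_Ahat invrK [_ * psi t]mulrC.
Qed.

Lemma inner_inf_Ahat : inner_inf (Ahat A) x rho = inner_inf A x rho.
Proof.
rewrite /inner_inf; apply: (congr1 (@ereal_inf R)).
apply/seteqP; split => _ [phi Bphi [psi Bpsi <-]].
  exists (fun t => (psi t)^-1); first exact: Bclass_inv.
  exists (fun t => (phi t)^-1); first exact: Bclass_inv.
  exact: esym (Qcirc_Ahat Bphi Bpsi).
exists (fun t => (psi t)^-1); first exact: Bclass_inv.
exists (fun t => (phi t)^-1); first exact: Bclass_inv.
have invK f : (fun t => (f t)^-1^-1) = f :> (R -> R).
  by apply/funext => t; rewrite invrK.
by rewrite (Qcirc_Ahat (Bclass_inv Bpsi) (Bclass_inv Bphi)) !invK.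
Qed.

End Qcirc_Ahat.

Lemma eq_gamma (R : realType) (Omega : set (R * R)) (A B : R * R -> 'M[R]_2) :
  sup_circ Omega A = sup_circ Omega B -> gamma Omega A = gamma Omega B.
Proof. by rewrite /gamma => ->. Qed.

Theorem lemma2 (R : realType) (Omega : set (R * R)) (A : R * R -> 'M[R]_2) :
  open Omega ->
  (exists M : R, forall p, Omega p -> `|p.1| <= M /\ `|p.2| <= M) ->
  (forall i j : 'I_2, measurable_fun Omega (fun p => A p i j)) ->
  (forall p, Omega p -> (A p)^T = A p) ->
  (exists M : R, forall p, Omega p -> forall i j, `|A p i j| <= M) ->
  (exists c : R, 0 < c /\ forall p, Omega p -> c <= \det (A p)) ->
  gamma Omega A = gamma Omega (Ahat A).
Proof.
move=> _ _ _ _ [B A_bounded] [c [c_gt0 c_le_detA]].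
apply/esym/eq_gamma/(congr1 (@ereal_sup R))/eq_imagel.
move=> -[y rho] /= [_ circle_in_Omega].
apply: (@inner_inf_Ahat _ _ _ _ c (B * B + B * B)) => // t.
rewrite c_le_detA //= det_mx2_le // => i j.
exact: A_bounded.
Qed.
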